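(* Let $X$ be a Peano continuum and $f:X\to X$ a cw-expansive homeomorphism. Then the set $\mathcal S$ of sinks of $f$ is open in $X$, and every point of $\mathcal S\cap\Omega(f)$ is periodic.
   Context: A Peano continuum is a compact, connected, locally connected metric space $(X,d)$ with more than one point. A homeomorphism $f:X\to X$ of a compact metric space is continuum-wise expansive (cw-expansive) if there is $\alpha>0$ such that $\sup_{n\in\mathbb Z}\operatorname{diam} f^n(C)>\alpha$ for every continuum $C\subset X$ containing more than one point. For $\varepsilon>0$ and $x\in X$: $W^s_\varepsilon(x)=\{y\in X:\ d(f^n(x),f^n(y))\le\varepsilon \text{ for all } n\ge 0\}$ and $W^s(x)=\{y\in X:\ d(f^n(x),f^n(y))\to 0 \text{ as } n\to\infty\}$. A point $x$ is a weak sink if $W^s_\varepsilon(x)$ is a neighborhood of $x$ for every $\varepsilon>0$; $x$ is a sink if it is a weak sink and there exists $\varepsilon>0$ with $W^s_\varepsilon(x)\subset W^s(x)$. $\Omega(f)$ is the non-wandering set: $x\in\Omega(f)$ iff for every neighborhood $U$ of $x$ there is $n\ge1$ with $f^n(U)\cap U\neq\emptyset$. *)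

From HB Require Import structures.
From mathcomp Require Import all_boot all_order all_algebra.
From mathcomp Require Import all_classical all_reals all_analysis.
Set Implicit Arguments. Unset Strict Implicit. Unset Printing Implicit Defensive.
Import Order.TTheory GRing.Theory Num.Theory.
Import numFieldTopology.Exports numFieldNormedType.Exports.
Local Open Scope classical_set_scope.
Local Open Scope ring_scope.

Section Defs.
Context {R : realType} {X : metricType R}.

Definition locally_connected_space : Prop :=
  forall (x : X) (U : set X), nbhs x U ->
    exists V : set X, [/\ open V, connected V, V x & V `<=` U].

Definition peano_continuum : Prop :=
  [/\ compact [set: X], connected [set: X], locally_connected_space
    & exists x y : X, x <> y].

Definition homeomorphism_with (f g : X -> X) : Prop :=
  [/\ cancel f g, cancel g f, continuous f & continuous g].

Definition zpow (f g : X -> X) (n : int) : X -> X :=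
  match n with
  | Posz k => iter k f
  | Negz k => iter k.+1 g
  end.

Definition continuum (C : set X) : Prop := compact C /\ connected C.

Definition nontrivial (C : set X) : Prop := exists x y, [/\ C x, C y & x <> y].

Definition diam (A : set X) : \bar R :=
  ereal_sup [set (mdist x y)%:E | x in A & y in A].

Definition cw_expansive (f g : X -> X) : Prop :=
  exists alpha : R, 0 < alpha /\
    forall C : set X, continuum C -> nontrivial C ->
      (alpha%:E < ereal_sup [set diam (zpow f g n @` C) | n in [set: int]])%E.

Definition local_stable_set (f : X -> X) (eps : R) (x : X) : set X :=
  [set y | forall n : nat, mdist (iter n f x) (iter n f y) <= eps].

Definition stable_set (f : X -> X) (x : X) : set X :=
  [set y | (fun n : nat => mdist (iter n f x) (iter n f y)) @ \oo --> (0 : R)].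

Definition weak_sink (f : X -> X) (x : X) : Prop :=
  forall eps : R, 0 < eps -> nbhs x (local_stable_set f eps x).

Definition sink (f : X -> X) (x : X) : Prop :=
  weak_sink f x /\
  exists eps : R, 0 < eps /\ local_stable_set f eps x `<=` stable_set f x.

Definition nonwandering (f : X -> X) (x : X) : Prop :=
  forall U : set X, nbhs x U ->
    exists n : nat, (1 <= n)%N /\ iter n f @` U `&` U !=set0.

Definition periodic_point (f : X -> X) (x : X) : Prop :=
  exists n : nat, (1 <= n)%N /\ iter n f x = x.

End Defs.

From HB Require Import structures.
From mathcomp Require Import all_boot all_order all_algebra.
From mathcomp Require Import all_classical all_reals all_analysis.
From mathcomp Require Import lra.
Import Order.TTheory GRing.Theory Num.Theory.
Import numFieldTopology.Exports numFieldNormedType.Exports.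
Local Open Scope classical_set_scope.
Local Open Scope ring_scope.

(** A sink [x] has a local stable set [W := W^s_δ(x)] which is a neighbourhood
  of [x]. Every interior point [y] of [W] is again a weak sink: otherwise local
  connectedness yields connected neighbourhoods of [y] inside [W] containing
  points that separate from [y] by more than [ε] at later and later times
  [k_m]. The upper limit, along an ultrafilter, of the images of these sets
  under [f^(k_m)] is a nontrivial continuum; since forward iterates of [W] stay
  [δ]-close to the orbit of [x] and [k_m → ∞], every integer iterate of this
  continuum has diameter at most [2δ], contradicting cw-expansivity for
  [2δ < α].

  A non-wandering sink [x] returns into its own basin: some [f^n x] is
  asymptotic to [x]. If [x] were not periodic, its returns near [x] would occur
  at arbitrarily late times, and continuity of [f^n] would force
  [d(x, f^n x) = 0]. *)

Lemma continuous_iter {T : topologicalType} {f : T -> T} (n : nat) :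
  continuous f -> continuous (iter n f).
Proof.
move=> cf; elim: n => [|n IH] x /=; first exact: cvg_id.
exact: (@continuous_comp _ _ _ (iter n f) f x (IH x) (cf _)).
Qed.

Section limit_set.
Context {T : topologicalType} {I : Type}.

Definition limit_set (G : set_system I) (D : I -> set T) : set T :=
  [set w | forall N, nbhs w N -> G [set i | D i `&` N !=set0]].

Lemma compact_ultra_cvg (G : set_system I) (u : I -> T) :
  compact [set: T] -> UltraFilter G -> exists q : T, u @ G --> q.
Proof.
move=> cT GU; have [q [_ clq]] := cT _ (fmap_proper_filter u ultra_proper) filterT.
exists q => N Nq; have [//|GnN] := in_ultra_setVsetC (u @^-1` N) GU.
by have [z [/= nNz Nz]] := clq (~` N) _ GnN Nq.
Qed.

Lemma closed_limit_set (G : set_system I) (D : I -> set T) :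
  closed (limit_set G D).
Proof.
by move=> w clw N /nbhs_interior /clw [w' [Lw' /Lw']].
Qed.

Lemma limit_set_cvg (G : set_system I) (D : I -> set T) (u : I -> T) q :
  Filter G -> (\forall i \near G, D i (u i)) -> u @ G --> q ->
  limit_set G D q.
Proof.
by move=> FG Du uq N /uq uN; apply: filterS2 Du uN => i Dui Nui; exists (u i).
Qed.

Lemma open_disjoint_separated {U V : set T} :
  open U -> open V -> U `&` V = set0 -> separated U V.
Proof.
move=> oU oV UV; split; apply/seteqP; split => // w [].
- move=> clUw Vw; have := clUw V (open_nbhs_nbhs (conj oV Vw)).
  by rewrite UV => -[].
- move=> Uw clVw; have := clVw U (open_nbhs_nbhs (conj oU Uw)).
  by rewrite setIC UV => -[].
Qed.

Lemma connected_escape_open_disjoint {C U V : set T} :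
  connected C -> open U -> open V -> U `&` V = set0 ->
  C `&` U !=set0 -> C `&` V !=set0 -> exists v, C v /\ ~ (U `|` V) v.
Proof.
move=> cC oU oV UV [u [Cu Uu]] [v [Cv Vv]]; apply: contrapT => /forallNP nCUV.
have CUV : C `<=` U `|` V.
  by move=> w Cw; have /not_andP[//|/contrapT] := nCUV w.
have [CU|CV] := connected_subset (open_disjoint_separated oU oV UV) CUV cC.
- have : (U `&` V) v by split => //; apply: CU.
  by rewrite UV.
- have : (U `&` V) u by split => //; apply: CV.
  by rewrite UV.
Qed.

Lemma closed_separated_setUl {A B : set T} :
  closed (A `|` B) -> separated A B -> closed A.
Proof.
move=> cAB [AB _] w clAw.
have [//|Bw] : (A `|` B) w by apply/cAB/(closureS _ clAw) => z Az; left.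
by have : (closure A `&` B) w by []; rewrite AB.
Qed.

Lemma connected_limit_set (G : set_system I) (D : I -> set T) :
  compact [set: T] ->
  (forall A B : set T, closed A -> closed B -> A `&` B = set0 ->
    exists U V, [/\ open U, open V, A `<=` U, B `<=` V & U `&` V = set0]) ->
  UltraFilter G -> (forall i, connected (D i)) -> connected (limit_set G D).
Proof.
move=> cT sepT GU Dc; apply/connectedP => E [En LE sepE].
have clE0 : closed (E false).
  by apply: closed_separated_setUl sepE; rewrite -LE; apply: closed_limit_set.
have clE1 : closed (E true).
  apply: (@closed_separated_setUl _ (E false)); last by rewrite separatedC.
  by rewrite setUC -LE; apply: closed_limit_set.
have [U [V [oU oV EU EV UV]]] := sepT _ _ clE0 clE1 (separated_disjoint sepE).
have [e0 E0] := En false; have [e1 E1] := En true.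
have meetU : G [set i | D i `&` U !=set0].
  have : limit_set G D e0 by rewrite LE; left.
  by apply; apply: open_nbhs_nbhs; split => //; apply: EU.
have meetV : G [set i | D i `&` V !=set0].
  have : limit_set G D e1 by rewrite LE; right.
  by apply; apply: open_nbhs_nbhs; split => //; apply: EV.
pose meetUV i := D i `&` U !=set0 /\ D i `&` V !=set0.
have [u escape] : exists u : I -> T,
    forall i, meetUV i -> D i (u i) /\ ~ (U `|` V) (u i).
  have escapes i : exists t, meetUV i -> D i t /\ ~ (U `|` V) t.
    have [[DU DV]|nUV] := pselect (meetUV i); last by exists e0.
    by have [t ?] := connected_escape_open_disjoint (Dc i) oU oV UV DU DV;
      exists t.
  by have [u ?] := choice escapes; exists u.
have GUV : G meetUV by apply: filterI.
have [q uq] := compact_ultra_cvg _ u cT GU.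
have Lq : limit_set G D q.
  by apply: limit_set_cvg uq; apply: filterS GUV => i /escape[].
have UVq : (U `|` V) q by move: Lq; rewrite LE => -[/EU|/EV]; [left|right].
have GW : G (u @^-1` (U `|` V)) := uq _ (open_nbhs_nbhs (conj (openU oU oV) UVq)).
have [i [UVi /escape[_ nUVi]]] := filter_ex (filterI GW GUV).
exact: nUVi.
Qed.

End limit_set.

Section metric_dynamics.
Context {R : realType} {X : metricType R}.
Local Notation d := (@mdist R X).

Lemma nbhs_mdistP (x : X) (A : set X) :
  nbhs x A <-> exists2 e, 0 < e & forall y, d x y < e -> A y.
Proof.
rewrite nbhs_ballP; split => -[e e0 eA]; exists e => // y.
- by move=> xy; apply: eA; rewrite ballEmdist.
- by rewrite ballEmdist; apply: eA.
Qed.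

Lemma near_continuous_mdist {h : X -> X} (x : X) {e : R} :
  continuous h -> 0 < e -> \forall z \near x, d (h x) (h z) < e.
Proof.
move=> ch e0; have := ch x (ball (h x) e); rewrite ballEmdist; apply.
by apply/nbhs_mdistP; exists e.
Qed.

Lemma mdist_triangle3 (a b c e : X) : d a e <= d a b + d b c + d c e.
Proof.
apply: le_trans (metric_triangle a c e) _; rewrite lerD2r.
exact: metric_triangle.
Qed.

Lemma stable_setP (f : X -> X) (x y : X) : stable_set f x y <->
  forall e, 0 < e -> \forall k \near \oo, d (iter k f x) (iter k f y) < e.
Proof.
rewrite /stable_set /= cvgrPdist_lt.
have dist0 k : `|0 - d (iter k f x) (iter k f y)| = d (iter k f x) (iter k f y).
  by rewrite sub0r normrN ger0_norm // mdist_ge0.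
by split=> xy e /xy; apply: filterS => k /=; rewrite dist0.
Qed.

Lemma stable_set_trans (f : X -> X) (x y z : X) :
  stable_set f x y -> stable_set f x z -> stable_set f y z.
Proof.
move=> /stable_setP xy /stable_setP xz; apply/stable_setP => e e0.
have e2 : 0 < e / 2 by rewrite divr_gt0.
apply: filterS2 (xy _ e2) (xz _ e2) => k hy hz.
have := metric_triangle (iter k f y) (iter k f x) (iter k f z).
by rewrite [d (iter k f y) (iter k f x)]metric_sym; lra.
Qed.

Lemma local_stable_set_stable {f : X -> X} {e del : R} {x y : X} :
  local_stable_set f e x `<=` stable_set f x -> 2 * del <= e ->
  local_stable_set f del x y -> local_stable_set f del y `<=` stable_set f y.
Proof.
move=> Wx dele xy z yz; apply: stable_set_trans (Wx y _) (Wx z _) => n.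
- by have := xy n; have := mdist_ge0 (iter n f x) (iter n f y); lra.
- have := metric_triangle (iter n f x) (iter n f y) (iter n f z).
  by have := xy n; have := yz n; lra.
Qed.

Lemma cvg_mdist_gt_neq {I : Type} {G : set_system I} {PG : ProperFilter G}
    {u v : I -> X} {q q' : X} {ep : R} :
  0 < ep -> (forall i, ep < d (u i) (v i)) -> u @ G --> q -> v @ G --> q' ->
  q <> q'.
Proof.
move=> ep0 far uq vq qE; rewrite -qE in vq.
have B : \forall w \near q, d q w < ep / 2.
  by apply/nbhs_mdistP; exists (ep / 2) => //; rewrite divr_gt0.
have uB : G (u @^-1` [set w | d q w < ep / 2]) := uq _ B.
have vB : G (v @^-1` [set w | d q w < ep / 2]) := vq _ B.
have [i [/= qu qv]] := filter_ex (filterI uB vB).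
have := metric_triangle (u i) q (v i); have := far i.
by rewrite [d _ q]metric_sym; lra.
Qed.

Lemma continuum_limit_set {I : Type} (G : set_system I) (D : I -> set X) :
  compact [set: X] -> UltraFilter G -> (forall i, connected (D i)) ->
  continuum (limit_set G D).
Proof.
move=> cX GU Dc; split.
  exact: subclosed_compact (closed_limit_set G D) cX (@subsetT _ _).
apply: (connected_limit_set G D cX _ GU Dc).
exact: (normal_openP (R := R)).1 (compact_normal (@metric_hausdorff R X) cX).
Qed.

Definition recurrent (f : X -> X) (x : X) : Prop :=
  forall e, 0 < e -> forall K, exists2 k, (K <= k)%N & d x (iter k f x) < e.

Section recurrence.
Variables (f : X -> X) (x : X).
Hypothesis cf : continuous f.

Lemma aperiodic_nbhs (K : nat) :
  (forall j, (0 < j <= K)%N -> iter j f x <> x) ->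
  exists2 N, nbhs x N & forall j z, (0 < j <= K)%N -> N z -> ~ N (iter j f z).
Proof.
move=> xK; pose r j := d x (iter j f x) / 2.
pose P (j : 'I_K.+1) z := (0 < j)%N ->
  d x z < r j /\ d (iter j f x) (iter j f z) < r j.
exists [set z | forall j, P j z].
  apply: filter_forall => j; have [j0|j0] := posnP j.
    by apply: nearW => z; rewrite /P j0.
  have rj : 0 < r j.
    rewrite /r divr_gt0 // mdist_gt0 eq_sym; apply/eqP/xK.
    by rewrite j0 -ltnS ltn_ord.
  have xz : \forall z \near x, d x z < r j by apply/nbhs_mdistP; exists (r j).
  apply: filterS2 xz (near_continuous_mdist x (continuous_iter j cf) rj).
  by move=> z h1 h2.
move=> j z /andP[j0 jK] Nz Njz.
have [h1 _] := Njz (Ordinal (jK : (j < K.+1)%N)) j0.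
have [_ h2] := Nz (Ordinal (jK : (j < K.+1)%N)) j0.
have := metric_triangle x (iter j f z) (iter j f x).
by rewrite [d (iter j f z) _]metric_sym; move: h1 h2; rewrite /r /=; lra.
Qed.

Lemma weak_sink_nonwandering_recurrent :
  weak_sink f x -> nonwandering f x -> ~ periodic_point f x -> recurrent f x.
Proof.
move=> wx nx np e e0 K.
have xK j : (0 < j <= K)%N -> iter j f x <> x.
  by move=> /andP[j0 _] jx; apply: np; exists j.
have [N Nx NK] := aperiodic_nbhs K xK.
have e2 : 0 < e / 2 by rewrite divr_gt0.
have B : \forall z \near x, d x z < e / 2 by apply/nbhs_mdistP; exists (e / 2).
have [n [n1 [_ [[y [[Ny By] Wy] <-] [[Nz Bz] _]]]]] :=
  nx _ (filterI (filterI Nx B) (wx _ e2)).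
exists n.
  by rewrite leqNgt; apply/negP => nK; apply: (NK n y) => //; rewrite n1 ltnW.
have := metric_triangle x (iter n f y) (iter n f x); have := Wy n.
by rewrite [d (iter n f y) _]metric_sym; move: Bz => /=; lra.
Qed.

Lemma recurrent_stable_iterate (n : nat) :
  recurrent f x -> stable_set f x (iter n f x) -> iter n f x = x.
Proof.
move=> rx /stable_setP st; apply: contrapT => nx.
have D0 : 0 < d x (iter n f x) by rewrite mdist_gt0 eq_sym; apply/eqP.
set e := d x (iter n f x) / 3.
have e0 : 0 < e by rewrite divr_gt0.
have [rho rho0 near_fn] :=
  (nbhs_mdistP _ _).1 (near_continuous_mdist x (continuous_iter n cf) e0).
have [K _ late] := st _ e0.
have rho_e : 0 < Num.min rho e by rewrite lt_min rho0 e0.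
have [k Kk] := rx _ rho_e K; rewrite lt_min => /andP[xk1 xk2].
have h1 := near_fn _ xk1; have h2 := late k Kk.
rewrite /= -iterD addnC iterD in h2.
have := mdist_triangle3 x (iter k f x) (iter n f (iter k f x)) (iter n f x).
by rewrite [d (iter n f (iter k f x)) _]metric_sym; move: h1 h2 xk2; rewrite /e; lra.
Qed.

Lemma sink_nonwandering_stable_iterate :
  sink f x -> nonwandering f x ->
  exists2 n, (1 <= n)%N & stable_set f x (iter n f x).
Proof.
move=> [wx [e [e0 Wx]]] nx.
have e2 : 0 < e / 2 by rewrite divr_gt0.
have [n [n1 [_ [[y Wy <-] Wz]]]] := nx _ (wx _ e2).
exists n => //; apply: Wx => k.
have := metric_triangle (iter k f x) (iter k f (iter n f y)) (iter k f (iter n f x)).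
have := Wz k; have := Wy (k + n)%N; rewrite !iterD.
by rewrite [d (iter k f (iter n f y)) _]metric_sym; lra.
Qed.

Lemma sink_nonwandering_periodic :
  sink f x -> nonwandering f x -> periodic_point f x.
Proof.
move=> sx nx; have [n n1 st] := sink_nonwandering_stable_iterate sx nx.
have [//|np] := pselect (periodic_point f x); exists n; split => //.
apply: recurrent_stable_iterate st.
exact: weak_sink_nonwandering_recurrent (proj1 sx) nx np.
Qed.

End recurrence.

Section cw_expansive.
Context {f g : X -> X}.

Lemma cw_expansive_separates : cw_expansive f g ->
  exists2 al, 0 < al & forall C : set X, continuum C -> nontrivial C ->
    exists n a b, [/\ C a, C b & al < d (zpow f g n a) (zpow f g n b)].
Proof.
move=> [al [al0 cw]]; exists al => // C cC ntC; apply: contrapT => small.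
have := cw C cC ntC; rewrite ltNge => /negP; apply.
apply: ge_ereal_sup => _ [n _ <-].
apply: ge_ereal_sup => _ [_ [a Ca <-] [_ [b Cb <-] <-]].
by rewrite lee_fin leNgt; apply/negP => ab; apply: small; exists n, a, b.
Qed.

Lemma iter_cancel (n : nat) : cancel f g -> cancel (iter n f) (iter n g).
Proof. by move=> fg; elim: n => [//|n IH] w; rewrite iterSr iterS fg IH. Qed.

Lemma zpow_iter {n : int} {k : nat} : cancel f g -> (`|n| <= k)%N ->
  exists j, forall v, zpow f g n (iter k f v) = iter j f v.
Proof.
case: n => [j|j] fg /= jk; first by exists (j + k)%N => v; rewrite iterD.
exists (k - j.+1)%N => v; rewrite -[in iter k f v](subnKC jk) iterD.
exact: (iter_cancel j.+1 fg).
Qed.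

Lemma continuous_zpow (n : int) :
  continuous f -> continuous g -> continuous (zpow f g n).
Proof. by case: n => j cf cg /=; apply: continuous_iter. Qed.

Lemma escaping_continuum {y : X} {U : set X} {ep : R} (m : nat) :
  locally_connected_space (X := X) -> continuous f -> 0 < ep ->
  ~ nbhs y (local_stable_set f ep y) -> nbhs y U ->
  exists V z k, [/\ connected V, V y, V `<=` U & V z] /\
    (m <= k)%N /\ ep < d (iter k f y) (iter k f z).
Proof.
move=> lc cf ep0 nWy Uy.
have near_m : \forall z \near y, forall k : 'I_m, d (iter k f y) (iter k f z) < ep.
  by apply: filter_forall => k; apply: near_continuous_mdist (continuous_iter k cf) ep0.
have [V [oV cV Vy VU]] := lc y _ (filterI Uy near_m).
have [z [Vz nz]] : exists z, V z /\ ~ local_stable_set f ep y z.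
  apply: contrapT => /forallNP Vstable; apply: nWy.
  apply: filterS (open_nbhs_nbhs (conj oV Vy)) => z Vz.
  by have /not_andP[//|/contrapT] := Vstable z.
have [k /negP] : exists k, ~ d (iter k f y) (iter k f z) <= ep.
  by apply: contrapT => /forallNP hk; apply: nz => k; apply: contrapT; apply: hk.
rewrite -ltNge => ep_k; exists V, z, k; split; first by split => // w /VU[].
split => //; rewrite leqNgt; apply/negP => km.
have [_ /(_ (Ordinal km))] := VU z Vz.
by move=> /(lt_trans ep_k); rewrite ltxx.
Qed.

Lemma zpow_limit_set_mdist_le {G : set_system nat} {PG : ProperFilter G}
    {V : nat -> set X} {k : nat -> nat} {x : X} {del : R} {n : int} {a b : X} :
  cancel f g -> continuous f -> continuous g ->
  (forall K, G [set m | (K <= k m)%N]) ->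
  (forall m, V m `<=` local_stable_set f del x) ->
  limit_set G (fun m => iter (k m) f @` V m) a ->
  limit_set G (fun m => iter (k m) f @` V m) b ->
  d (zpow f g n a) (zpow f g n b) <= 2 * del.
Proof.
move=> fg cf cg kG Vx La Lb; rewrite leNgt; apply/negP => far.
set r := (d (zpow f g n a) (zpow f g n b) - 2 * del) / 2.
have r0 : 0 < r by rewrite divr_gt0 // subr_gt0.
have cz := continuous_zpow n cf cg.
have [m [[[_ [[v1 Vv1 <-] near1]] [_ [[v2 Vv2 <-] near2]]] km]] :=
  filter_ex (filterI (filterI (La _ (near_continuous_mdist a cz r0))
    (Lb _ (near_continuous_mdist b cz r0))) (kG `|n|%N)).
have [j jE] := zpow_iter fg km.
move: near1 near2; rewrite /= !jE => near1 near2.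
have := mdist_triangle3 (zpow f g n a) (iter j f v1) (iter j f v2) (zpow f g n b).
have := metric_triangle (iter j f v1) (iter j f x) (iter j f v2).
have := Vx m v1 Vv1 j; have := Vx m v2 Vv2 j.
rewrite [d (iter j f v1) (iter j f x)]metric_sym.
rewrite [d (iter j f v2) (zpow f g n b)]metric_sym.
by move: near1 near2 far; rewrite /r; lra.
Qed.

Lemma cw_expansive_weak_sink {al del : R} {x y : X} :
  peano_continuum (X := X) -> homeomorphism_with f g ->
  (forall C : set X, continuum C -> nontrivial C ->
    exists n a b, [/\ C a, C b & al < d (zpow f g n a) (zpow f g n b)]) ->
  2 * del < al -> nbhs y (local_stable_set f del x) -> weak_sink f y.
Proof.
move=> [cX _ lcX _] [fg _ cf cg] cw del_al Wy ep ep0; apply: contrapT => nWy.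
have [V /choice[z /choice[k escape]]] :=
  choice (fun m => escaping_continuum m lcX cf ep0 nWy Wy).
have [G [GU oG]] := @ultraFilterLemma nat \oo _.
have kG K : G [set m | (K <= k m)%N].
  apply: oG; exists K => // m /= Km.
  by apply: leq_trans Km _; case: (escape m) => _ [].
pose D m := iter (k m) f @` V m.
have [q yq] := compact_ultra_cvg G (fun m => iter (k m) f y) cX GU.
have [q' zq'] := compact_ultra_cvg G (fun m => iter (k m) f (z m)) cX GU.
have Dq : limit_set G D q.
  apply: limit_set_cvg yq; apply: nearW => m.
  by exists y => //; case: (escape m) => -[].
have Dq' : limit_set G D q'.
  apply: limit_set_cvg zq'; apply: nearW => m.
  by exists (z m) => //; case: (escape m) => -[].
have qq' : q <> q'.
  by apply: (cvg_mdist_gt_neq ep0 _ yq zq') => m; case: (escape m) => _ [].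
have Dcont : continuum (limit_set G D).
  apply: continuum_limit_set cX GU _ => m; have [[cV _ _ _] _] := escape m.
  by apply: connected_continuous_connected cV _; apply/continuous_subspaceT/continuous_iter.
have [n [a [b [Da Db far]]]] : exists n a b,
    [/\ limit_set G D a, limit_set G D b & al < d (zpow f g n a) (zpow f g n b)].
  by apply: (cw _ Dcont); exists q, q'.
have Vx m : V m `<=` local_stable_set f del x by case: (escape m) => -[].
have : d (zpow f g n a) (zpow f g n b) <= 2 * del.
  exact: zpow_limit_set_mdist_le fg cf cg kG Vx Da Db.
lra.
Qed.

Lemma sink_near_sink {x : X} :
  peano_continuum (X := X) -> homeomorphism_with f g -> cw_expansive f g ->
  sink f x -> \forall y \near x, sink f y.
Proof.
move=> pX hX /cw_expansive_separates[al al0 cw] [wx [e [e0 Wx]]].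
pose del := Num.min e al / 4.
have min0 : 0 < Num.min e al by rewrite lt_min e0 al0.
have min_e : Num.min e al <= e by rewrite ge_min lexx.
have min_al : Num.min e al <= al by rewrite ge_min lexx orbT.
have del0 : 0 < del by rewrite divr_gt0.
apply: filterS (nbhs_interior (wx _ del0)) => y Wy; split.
  by apply: (cw_expansive_weak_sink pX hX cw _ Wy); rewrite /del; lra.
exists del; split => //.
by apply: (local_stable_set_stable Wx _ (nbhs_singleton Wy)); rewrite /del; lra.
Qed.

End cw_expansive.
End metric_dynamics.

Theorem mainTheorem6 (R : realType) (X : metricType R) (f g : X -> X) :
  @peano_continuum R X ->
  homeomorphism_with f g ->
  cw_expansive f g ->
  open [set x | sink f x] /\
  (forall x : X, sink f x -> nonwandering f x -> periodic_point f x).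
Proof.
move=> pX hX cw; split; first by rewrite openE => x /(sink_near_sink pX hX cw).
by case: hX => _ _ cf _ x; apply: sink_nonwandering_periodic.
Qed.
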